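(* Let $X$ be a finite connected simplicial complex and $\delta$ a cellular perversity. The category $\operatorname{Pre}\Lambda(X,\delta)$ of presheaves on the poset $\Lambda(X,\delta)$ is isomorphic to the category $\mathcal R(X,\delta)$.
   Context: Simplices are open; $\Delta\leftrightarrow\Delta'$ means one is a face of the other. A cellular perversity is $\delta:\mathbb Z_{\ge0}\to\mathbb Z$, $\delta(0)=0$, mapping each $\{0,\dots,k\}$ bijectively onto an interval $\{a,\dots,a+k\}$, $a\le0$; $\delta(\Delta):=\delta(\dim\Delta)$. $\Lambda(X,\delta)$: simplices ordered by $\Delta\ge\Delta'$ iff there is a chain $\Delta=\Delta_0,\dots,\Delta_r=\Delta'$ ($r\ge0$) with $\Delta_i\leftrightarrow\Delta_{i+1}$, $\delta(\Delta_i)=\delta(\Delta_{i+1})+1$. A presheaf on a poset $\Lambda$ assigns a vector space $S(\alpha)$ to each $\alpha$ and linear maps $s(\alpha,\beta):S(\alpha)\to S(\beta)$ for $\alpha\ge\beta$, with $s(\alpha,\alpha)=\mathrm{Id}$ and $s(\beta,\gamma)s(\alpha,\beta)=s(\alpha,\gamma)$; morphisms are families of linear maps commuting with the $s$. $\mathcal R(X,\delta)$: objects assign a finite-dimensional $\mathbb F$-vector space $S(\Delta)$ to each simplex and a linear map $s(\Delta,\Delta'):S(\Delta)\to S(\Delta')$ to each pair with $\Delta\leftrightarrow\Delta'$, $\delta(\Delta)=\delta(\Delta')+1$, such that $s(\Delta_1,\Delta'')s(\Delta',\Delta_1)=s(\Delta_2,\Delta'')s(\Delta',\Delta_2)$ whenever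 $\delta(\Delta')=k+1$, $\delta(\Delta_1)=\delta(\Delta_2)=k$, $\delta(\Delta'')=k-1$ and $\Delta'\leftrightarrow\Delta_j\leftrightarrow\Delta''$; morphisms are families of linear maps commuting with the $s$. *)

From HB Require Import structures.
From mathcomp Require Import all_boot all_order all_algebra.
Set Implicit Arguments. Unset Strict Implicit. Unset Printing Implicit Defensive.
Import GRing.Theory Num.Theory.
Local Open Scope ring_scope.

Definition simplicial_complex (V : finType) (X : {set {set V}}) : Prop :=
  set0 \notin X /\
  (forall A B : {set V}, A \in X -> B \subset A -> B != set0 -> B \in X).

Definition simplex (V : finType) (X : {set {set V}}) := {A : {set V} | A \in X}.

Definition sdim (V : finType) (X : {set {set V}}) (a : simplex X) : nat :=
  (#|val a|).-1.

Definition incident (V : finType) (X : {set {set V}}) : rel (simplex X) :=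
  fun a b => (val a \subset val b) || (val b \subset val a).

Definition sc_connected (V : finType) (X : {set {set V}}) : Prop :=
  forall a b : simplex X, connect (@incident V X) a b.

Definition cellular_perversity (d : nat -> int) : Prop :=
  d 0%N = 0 /\
  forall k : nat, exists a : int, a <= 0 /\
    (forall i j : nat, (i <= k)%N -> (j <= k)%N -> d i = d j -> i = j) /\
    (forall i : nat, (i <= k)%N -> a <= d i <= a + k%:Z) /\
    (forall z : int, a <= z <= a + k%:Z -> exists2 i : nat, (i <= k)%N & d i = z).

Section Cats.
Variables (F : fieldType) (V : finType) (X : {set {set V}}) (d : nat -> int).

Local Notation simp := (simplex X).

Definition pdim (a : simp) : int := d (sdim a).

Definition lcover : rel simp :=
  fun a b => incident a b && (pdim a == pdim b + 1).

(* Delta >= Delta' in Lambda(X, delta) *)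
Definition lam_ge : rel simp := connect lcover.

Record presheaf := Presheaf {
  ps_sp : simp -> vectType F;
  ps_map : forall a b : simp, lam_ge a b -> 'Hom(ps_sp a, ps_sp b);
  ps_id : forall a (h : lam_ge a a), ps_map h = \1%VF;
  ps_comp : forall a b c (hab : lam_ge a b) (hbc : lam_ge b c) (hac : lam_ge a c),
      (ps_map hbc \o ps_map hab)%VF = ps_map hac
}.

Record presheaf_hom (S T : presheaf) := PresheafHom {
  ph_fun : forall a : simp, 'Hom(ps_sp S a, ps_sp T a);
  ph_nat : forall a b (h : lam_ge a b),
      (ph_fun b \o ps_map S h)%VF = (ps_map T h \o ph_fun a)%VF
}.

Definition ph_id (S : presheaf) : presheaf_hom S S.
Proof.
exists (fun a => \1%VF) => a b h; by rewrite comp_lfun1l comp_lfun1r.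
Defined.

Definition ph_comp (S T U : presheaf) (g : presheaf_hom T U) (f : presheaf_hom S T) :
  presheaf_hom S U.
Proof.
exists (fun a => (ph_fun g a \o ph_fun f a)%VF) => a b h.
by rewrite -comp_lfunA ph_nat comp_lfunA ph_nat -comp_lfunA.
Defined.

Record robj := RObj {
  r_sp : simp -> vectType F;
  r_map : forall a b : simp, lcover a b -> 'Hom(r_sp a, r_sp b);
  r_comm : forall a' a1 a2 a'' (h1 : lcover a' a1) (h1' : lcover a1 a'')
                  (h2 : lcover a' a2) (h2' : lcover a2 a''),
      (r_map h1' \o r_map h1)%VF = (r_map h2' \o r_map h2)%VF
}.

Record robj_hom (S T : robj) := RHom {
  rh_fun : forall a : simp, 'Hom(r_sp S a, r_sp T a);
  rh_nat : forall a b (h : lcover a b),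
      (rh_fun b \o r_map S h)%VF = (r_map T h \o rh_fun a)%VF
}.

Definition rh_id (S : robj) : robj_hom S S.
Proof.
exists (fun a => \1%VF) => a b h; by rewrite comp_lfun1l comp_lfun1r.
Defined.

Definition rh_comp (S T U : robj) (g : robj_hom T U) (f : robj_hom S T) :
  robj_hom S U.
Proof.
exists (fun a => (rh_fun g a \o rh_fun f a)%VF) => a b h.
by rewrite -comp_lfunA rh_nat comp_lfunA rh_nat -comp_lfunA.
Defined.

Definition Pre_R_isomorphic : Prop :=
  exists (Fo : presheaf -> robj)
         (Fm : forall S T : presheaf, presheaf_hom S T -> robj_hom (Fo S) (Fo T)),
    [/\ (forall S, Fm S S (ph_id S) = rh_id (Fo S)),
        (forall S T U (f : presheaf_hom S T) (g : presheaf_hom T U),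
            Fm S U (ph_comp g f) = rh_comp (Fm T U g) (Fm S T f)),
        bijective Fo &
        (forall S T, bijective (Fm S T))].

End Cats.

(* A presheaf on Lambda(X, delta) restricts to an object of R(X, delta): its maps along
   covering pairs satisfy the diamond condition by functoriality.  Conversely, an object of
   R(X, delta) extends to all pairs a >= b by composing along a saturated chain from a to b,
   and the point is that the composite does not depend on the chain.  All chains from a to b
   have length pdim a - pdim b, so by induction it suffices that the covers x of a lying
   above b are linked by diamonds a > x, y > z >= b.  A cellular perversity is increasing
   in the dimension where it is nonnegative and decreasing where it is negative, so the
   order is reverse inclusion among simplices of nonnegative pdim, inclusion among those of
   nonpositive pdim, and "sharing a vertex" across 0.  Linking the covers of a therefore
   amounts to the connectivity of Johnson graphs of k-sets between two fixed sets. *)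

From mathcomp Require Import all_boot all_order all_algebra zify.
From Stdlib Require Import ProofIrrelevance FunctionalExtensionality.
Set Implicit Arguments. Unset Strict Implicit. Unset Printing Implicit Defensive.
Import Order.TTheory GRing.Theory Num.Theory.
Local Open Scope ring_scope.

Section Perversity.
Variable d : nat -> int.
Hypothesis hd : cellular_perversity d.

Lemma perv0 : d 0 = 0. Proof. by case: hd. Qed.

Lemma perv_inj : injective d.
Proof.
move=> i j; case: hd => _ /(_ (maxn i j)) [a [_ [inj _]]].
by apply: inj; rewrite ?leq_maxl ?leq_maxr.
Qed.

Lemma perv_surj i j z : d i <= z <= d j -> exists2 m, (m <= maxn i j)%N & d m = z.
Proof.
case: hd => _ /(_ (maxn i j)) [a [_ [_ [rng sur]]]] /andP[iz zj]; apply: sur.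
have /andP[ai _] := rng i (leq_maxl _ _); have /andP[_ ja] := rng j (leq_maxr _ _).
by rewrite (le_trans ai iz) (le_trans zj ja).
Qed.

Lemma perv_leq_ge0 i j : 0 <= d i <= d j -> (i <= j)%N.
Proof.
move=> dij; have [|m] := @perv_surj 0 j (d i); first by rewrite perv0.
by rewrite max0n => mj /perv_inj <-.
Qed.

Lemma perv_leq_le0 i j : d j <= d i <= 0 -> (i <= j)%N.
Proof.
move=> dji; have [|m] := @perv_surj j 0 (d i); first by rewrite perv0.
by rewrite maxn0 => mj /perv_inj <-.
Qed.

Lemma perv_between_ge0 i j z : 0 <= d i <= z -> z <= d j ->
  exists2 m, d m = z & (i <= m <= j)%N.
Proof.
case/andP=> i0 iz zj; have [|m _ dm] := @perv_surj i j z; first by rewrite iz.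
by exists m; rewrite // !perv_leq_ge0 // dm ?iz ?zj ?(le_trans i0 iz) ?i0.
Qed.

Lemma perv_between_le0 i j z : d j <= z -> z <= d i <= 0 ->
  exists2 m, d m = z & (i <= m <= j)%N.
Proof.
move=> jz /andP[zi i0]; have [|m _ dm] := @perv_surj j i z; first by rewrite jz.
by exists m; rewrite // !perv_leq_le0 // dm ?jz ?zi ?(le_trans zi i0) ?i0.
Qed.

Lemma perv_ltn_ge0 i j : 0 <= d i < d j -> (i < j)%N.
Proof.
case/andP=> i0 ij; rewrite ltn_neqAle perv_leq_ge0 ?i0 ?ltW // andbT.
by apply: contraTneq ij => ->; rewrite ltxx.
Qed.

Lemma perv_ltn_le0 i j : d j < d i <= 0 -> (i < j)%N.
Proof.
case/andP=> ji i0; rewrite ltn_neqAle perv_leq_le0 ?i0 ?ltW // andbT.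
by apply: contraTneq ji => ->; rewrite ltxx.
Qed.
End Perversity.

Section Subsets.
Variable V : finType.
Implicit Types A B C L U w x y : {set V}.

Lemma exists_subset_between A B k : A \subset B -> (#|A| <= k <= #|B|)%N ->
  exists C, [/\ A \subset C, C \subset B & #|C| = k].
Proof.
move=> AB /andP[Ak kB]; have [s [uniq_s size_s sBA]] : exists s : seq V,
    [/\ uniq s, size s = (k - #|A|)%N & {subset s <= B :\: A}].
  by apply/card_geqP; rewrite cardsD (setIidPr AB) leq_sub2r.
have AsI : A :&: [set x in s] = set0.
  by apply/setP => x; rewrite !inE; apply/negbTE/andP => -[xA /sBA/setDP[_ /negP]].
exists (A :|: [set x in s]); split; first exact: subsetUl.
  by rewrite subUset AB; apply/subsetP => x; rewrite inE => /sBA /setDP[].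
by rewrite cardsU AsI cards0 subn0 cardsE (card_uniqP uniq_s) size_s subnKC.
Qed.

Lemma johnson_connected (T : Type) (g : {set V} -> T) L U k :
  (forall w w', L \subset w -> w \subset U -> L \subset w' -> w' \subset U ->
     #|w| = k -> #|w'| = k -> (k <= #|w :&: w'|.+1)%N -> g w = g w') ->
  forall x y, L \subset x -> x \subset U -> L \subset y -> y \subset U ->
     #|x| = k -> #|y| = k -> g x = g y.
Proof.
move=> g_adj x y Lx xU Ly yU kx ky; move: {2}#|x :\: y| (erefl #|x :\: y|) => n.
elim: n x Lx xU kx => [|n IH] x Lx xU kx xyn.
  suff -> : x = y by [].
  by apply/eqP; rewrite eqEcard kx ky leqnn andbT -setD_eq0 -cards_eq0 xyn.
have /card_gt0P[u /setDP[ux uy]] : (0 < #|x :\: y|)%N by rewrite xyn.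
have /card_gt0P[v /setDP[vy vx]] : (0 < #|y :\: x|)%N.
  by rewrite cardsD setIC ky -kx -cardsD xyn.
have kxu : k = #|x :\ u|.+1 by rewrite -kx (cardsD1 u x) ux.
set w := v |: (x :\ u).
have Lw : L \subset w.
  apply: subset_trans (subsetUr _ _); rewrite subsetD1 Lx /=.
  by apply: contraNN uy; apply: (subsetP Ly).
have wU : w \subset U.
  by rewrite subUset sub1set (subsetP yU) // (subset_trans (subD1set _ _) xU).
have kw : #|w| = k by rewrite cardsU1 !inE (negbTE vx) andbF kxu.
transitivity (g w).
  apply: g_adj => //; rewrite kxu ltnS; apply: subset_leq_card.
  by rewrite subsetI subD1set subsetUr.
apply: IH => //; move: xyn; rewrite (cardsD1 u) !inE ux uy => -[<-].
apply: eq_card => t; rewrite !inE.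
by case: (t =P v) => [->|_]; rewrite ?vy ?andbF //= andbCA.
Qed.

End Subsets.

Section Simplices.
Variables (V : finType) (X : {set {set V}}).
Hypothesis hX : simplicial_complex X.
Local Notation simp := (simplex X).
Implicit Types A C : {set V}.

Lemma simplex_card_gt0 (a : simp) : (0 < #|val a|)%N.
Proof. by rewrite card_gt0; apply: contraTneq (valP a) => ->; case: hX. Qed.

Lemma sdimS (a : simp) : (sdim a).+1 = #|val a|.
Proof. by rewrite /sdim prednK ?simplex_card_gt0. Qed.

Lemma face_in_complex (a : simp) A : A \subset val a -> (0 < #|A|)%N -> A \in X.
Proof. by case: hX => _ faceX Aa; rewrite card_gt0; apply: faceX (valP a) Aa. Qed.

Lemma sdim_insubd (s : simp) A : A \in X -> sdim (insubd s A) = #|A|.-1.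
Proof. by move=> AX; rewrite /sdim insubdK. Qed.

Lemma simplex_eq (a b : simp) : val a \subset val b -> sdim a = sdim b -> a = b.
Proof. by move=> ab e; apply/val_inj/eqP; rewrite eqEcard ab -!sdimS e /=. Qed.

Lemma simplex_between (s t : simp) m : val s \subset val t -> (sdim s <= m <= sdim t)%N ->
  exists c : simp, [/\ val s \subset val c, val c \subset val t & sdim c = m].
Proof.
move=> st smt; have [C [sC Ct kC]] : exists C,
    [/\ val s \subset C, C \subset val t & #|C| = m.+1].
  by apply: exists_subset_between; rewrite // -!sdimS !ltnS.
have CX : C \in X by apply: face_in_complex Ct _; rewrite kC.
by exists (insubd s C); rewrite insubdK // sdim_insubd // kC.
Qed.

End Simplices.

Section Order.
Variables (V : finType) (X : {set {set V}}) (d : nat -> int).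
Hypotheses (hX : simplicial_complex X) (hd : cellular_perversity d).
Local Notation simp := (simplex X).
Implicit Types (a b c : simp) (A B : {set V}).

Lemma lcover_pdim a b : lcover d a b -> pdim d a = pdim d b + 1.
Proof. by case/andP=> _ /eqP. Qed.

Lemma lcover_ltn_ge0 a b : lcover d a b -> 0 <= pdim d b -> (sdim b < sdim a)%N.
Proof.
move=> /lcover_pdim e b0; apply: (perv_ltn_ge0 hd).
by rewrite -/(pdim d b) -/(pdim d a) e b0 ltrDl ltr01.
Qed.

Lemma lcover_ltn_le0 a b : lcover d a b -> pdim d a <= 0 -> (sdim a < sdim b)%N.
Proof.
move=> /lcover_pdim e a0; apply: (perv_ltn_le0 hd).
by rewrite -/(pdim d b) -/(pdim d a) a0 e ltrDl ltr01.
Qed.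

Lemma lcover_sub_ge0 a b : lcover d a b -> 0 <= pdim d b -> val b \subset val a.
Proof.
move=> ab /(lcover_ltn_ge0 ab); case/andP: ab => /orP[ab|//] _.
by rewrite ltnNge -ltnS !sdimS // subset_leq_card.
Qed.

Lemma lcover_sub_le0 a b : lcover d a b -> pdim d a <= 0 -> val a \subset val b.
Proof.
move=> ab /(lcover_ltn_le0 ab); case/andP: ab => /orP[//|ba] _.
by rewrite ltnNge -ltnS !sdimS // subset_leq_card.
Qed.

Lemma lcover_insubd (s : simp) A B : A \in X -> B \in X ->
  lcover d (insubd s A) (insubd s B) =
  ((A \subset B) || (B \subset A)) && (d #|A|.-1 == d #|B|.-1 + 1).
Proof. by move=> AX BX; rewrite /lcover /incident /pdim !sdim_insubd ?insubdK. Qed.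

Lemma lcover_insubdr (s t : simp) B : B \in X ->
  lcover d t (insubd s B) =
  ((val t \subset B) || (B \subset val t)) && (pdim d t == d #|B|.-1 + 1).
Proof. by move=> BX; rewrite /lcover /incident /pdim !sdim_insubd ?insubdK. Qed.

Lemma lam_ge_ind (P : simp -> simp -> Prop) :
  (forall a, P a a) ->
  (forall a c b, lcover d a c -> lam_ge d c b -> P c b -> P a b) ->
  forall a b, lam_ge d a b -> P a b.
Proof.
move=> P0 PS a b /connectP[s]; elim: s a => [|c s IH] a /= => [_ ->|/andP[ac cs] bl] //.
by apply: PS ac _ (IH c cs bl); apply/connectP; exists s.
Qed.

Lemma lam_ge_pdim a b : lam_ge d a b -> pdim d b <= pdim d a.
Proof.
move: a b; apply: lam_ge_ind => // a c b /lcover_pdim -> _ bc.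
by rewrite (le_trans bc) // lerDl ler01.
Qed.

Lemma lam_ge_sub_ge0 a b : lam_ge d a b -> 0 <= pdim d b -> val b \subset val a.
Proof.
move: a b; apply: lam_ge_ind => // a c b ac cb IH b0.
exact: subset_trans (IH b0) (lcover_sub_ge0 ac (le_trans b0 (lam_ge_pdim cb))).
Qed.

Lemma lam_ge_sub_le0 a b : lam_ge d a b -> pdim d a <= 0 -> val a \subset val b.
Proof.
move: a b; apply: lam_ge_ind => // a c b ac cb IH a0.
apply: subset_trans (lcover_sub_le0 ac a0) (IH _).
by rewrite (le_trans _ a0) // (lcover_pdim ac) lerDl ler01.
Qed.

Lemma lam_ge_meet a b : lam_ge d a b -> pdim d b <= 0 <= pdim d a ->
  exists2 p, p \in val a & p \in val b.
Proof.
move: a b; apply: lam_ge_ind => [a _|a c b ac cb IH /andP[b0 a0]].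
  by have /card_gt0P[p ap] := simplex_card_gt0 hX a; exists p.
have [c0|c0] := lerP 0 (pdim d c).
  by have [|p pc pb] := IH; [rewrite b0 | exists p; rewrite ?(subsetP (lcover_sub_ge0 ac c0))].
have /card_gt0P[p ap] := simplex_card_gt0 hX a; exists p => //.
apply: subsetP p ap; apply: lam_ge_sub_le0; first exact: connect_trans (connect1 ac) cb.
by rewrite (lcover_pdim ac) lezD1.
Qed.

Lemma lam_ge_of_sub_ge0 a b : 0 <= pdim d b <= pdim d a -> val b \subset val a ->
  lam_ge d a b.
Proof.
have [n] := ubnP (sdim a); elim: n a => // n IH a /ltnSE an /andP[b0 ba] sba.
have [e|ne] := eqVneq (pdim d a) (pdim d b).
  by rewrite (simplex_eq hX sba (perv_inj hd (esym e))); apply: connect0.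
have ba1 : pdim d b <= pdim d a - 1 by rewrite lerBrDr lezD1 lt_neqAle eq_sym ne ba.
have [||m dm /andP[bm ma]] := perv_between_ge0 hd (i := sdim b) (j := sdim a) (z := pdim d a - 1).
- by rewrite b0.
- by rewrite gerBl ler01.
have [c [bc ca cm]] := simplex_between hX sba (introT andP (conj bm ma)).
have ac : lcover d a c by rewrite /lcover /incident ca orbT /pdim cm dm subrK eqxx.
have bc_le : pdim d b <= pdim d c by rewrite /pdim cm dm.
apply: connect_trans (connect1 ac) (IH c _ _ bc); last by rewrite b0.
exact: leq_trans (lcover_ltn_ge0 ac (le_trans b0 bc_le)) an.
Qed.

Lemma lam_ge_of_sub_le0 a b : pdim d b <= pdim d a <= 0 -> val a \subset val b ->
  lam_ge d a b.
Proof.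
have [n] := ubnP (sdim b); elim: n b => // n IH b /ltnSE bn /andP[ba a0] sab.
have [e|ne] := eqVneq (pdim d a) (pdim d b).
  by rewrite -(simplex_eq hX sab (perv_inj hd e)); apply: connect0.
have b1a : pdim d b + 1 <= pdim d a by rewrite lezD1 lt_neqAle eq_sym ne ba.
have [||m dm /andP[am mb]] := perv_between_le0 hd (i := sdim a) (j := sdim b) (z := pdim d b + 1).
- by rewrite lerDl ler01.
- by rewrite b1a.
have [c [ac cb cm]] := simplex_between hX sab (introT andP (conj am mb)).
have cb1 : lcover d c b by rewrite /lcover /incident cb /pdim cm dm eqxx.
have ca_le : pdim d c <= pdim d a by rewrite /pdim cm dm.
apply: connect_trans (IH c _ _ ac) (connect1 cb1); last by rewrite ca_le.
exact: leq_trans (lcover_ltn_le0 cb1 (le_trans ca_le a0)) bn.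
Qed.

Lemma lam_ge_of_meet a b p : pdim d b <= 0 <= pdim d a ->
  p \in val a -> p \in val b -> lam_ge d a b.
Proof.
case/andP=> b0 a0 pa pb; set v := insubd a [set p].
have vX : [set p] \in X by apply: (face_in_complex hX (a := a)); rewrite ?sub1set ?cards1.
have v0 : pdim d v = 0 by rewrite /pdim sdim_insubd // cards1 perv0.
have av : lam_ge d a v by apply: lam_ge_of_sub_ge0; rewrite ?v0 ?a0 ?insubdK ?sub1set.
have vb : lam_ge d v b by apply: lam_ge_of_sub_le0; rewrite ?v0 ?b0 ?insubdK ?sub1set.
exact: connect_trans av vb.
Qed.

End Order.

Section Diamonds.
Variables (V : finType) (X : {set {set V}}) (d : nat -> int).
Hypotheses (hX : simplicial_complex X) (hd : cellular_perversity d).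
Local Notation simp := (simplex X).
Implicit Types (x y : simp) (L w Z : {set V}).

(* [k1] is the dimension of the covers of [a], [k2] that of their covers. *)
Variables (T : Type) (f : simp -> T) (a b : simp) (k1 k2 : nat).
Hypotheses (dk1 : pdim d a = d k1 + 1) (dk12 : d k1 = d k2 + 1) (b_below : pdim d b <= d k2).
Hypothesis f_diamond : forall x y z, lcover d a x -> lcover d a y ->
  lcover d x z -> lcover d y z -> lam_ge d z b -> f x = f y.

Let g w := f (insubd a w).

Let g_val x : g (val x) = f x. Proof. by rewrite /g valKd. Qed.

Let pdim_cover x : lcover d a x -> pdim d x = d k1.
Proof. by move/lcover_pdim; rewrite dk1 => /addIr. Qed.

Let card_cover x : lcover d a x -> #|val x| = k1.+1.
Proof. by move/pdim_cover/(perv_inj hd) <-; rewrite sdimS. Qed.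

Let cover_sub_ge0 x : 0 <= d k1 -> lcover d a x -> val x \subset val a.
Proof. by move=> k1_ge0 ax; apply: (lcover_sub_ge0 hX hd ax); rewrite pdim_cover. Qed.

Let g_diamond w w' Z : w \in X -> w' \in X -> Z \in X ->
  (val a \subset w) || (w \subset val a) -> (val a \subset w') || (w' \subset val a) ->
  (w \subset Z) || (Z \subset w) -> (w' \subset Z) || (Z \subset w') ->
  #|w| = k1.+1 -> #|w'| = k1.+1 -> #|Z| = k2.+1 -> lam_ge d (insubd a Z) b -> g w = g w'.
Proof.
move=> wX w'X ZX aw aw' wZ w'Z kw kw' kZ Zb.
by apply: (f_diamond (z := insubd a Z)); rewrite ?lcover_insubd ?lcover_insubdr ?kw ?kw' ?kZ
  ?aw ?aw' ?wZ ?w'Z //= ?dk1 ?dk12 ?eqxx.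
Qed.

Let g_exchange_faces L : 0 <= d k2 -> (#|L| <= k2.+1)%N ->
  (forall Z, Z \in X -> L \subset Z -> #|Z| = k2.+1 -> lam_ge d (insubd a Z) b) ->
  forall w w', L \subset w -> w \subset val a -> L \subset w' -> w' \subset val a ->
  #|w| = k1.+1 -> #|w'| = k1.+1 -> g w = g w'.
Proof.
move=> k2_ge0 Lk2 LZb; apply: johnson_connected => w w' Lw wa Lw' w'a kw kw' ww'.
have k21 : (k2 < k1)%N by apply: (perv_ltn_ge0 hd); rewrite k2_ge0 dk12 ltrDl ltr01.
have [Z [LZ Zww' kZ]] : exists Z, [/\ L \subset Z, Z \subset w :&: w' & #|Z| = k2.+1].
  apply: exists_subset_between; first by rewrite subsetI Lw Lw'.
  by rewrite Lk2 -ltnS (leq_trans _ ww').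
have [Zw Zw'] : Z \subset w /\ Z \subset w' by move: Zww'; rewrite subsetI => /andP.
have wX : w \in X by apply: (face_in_complex hX wa); rewrite kw.
have w'X : w' \in X by apply: (face_in_complex hX w'a); rewrite kw'.
have ZX : Z \in X by apply: (face_in_complex hX (subset_trans Zw wa)); rewrite kZ.
by apply: (g_diamond (Z := Z)); rewrite ?wa ?w'a ?Zw ?Zw' ?orbT //; apply: LZb.
Qed.

Lemma covers_const_ge0 x y : 0 <= pdim d b -> lcover d a x -> lcover d a y ->
  lam_ge d x b -> lam_ge d y b -> f x = f y.
Proof.
move=> b0 ax ay xb yb; have k2_ge0 := le_trans b0 b_below.
have k1_ge0 : 0 <= d k1 by rewrite dk12 addr_ge0.
rewrite -!g_val; apply: (g_exchange_faces (L := val b));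
  rewrite ?(card_cover ax) ?(card_cover ay) ?cover_sub_ge0
    ?(lam_ge_sub_ge0 hX hd xb) ?(lam_ge_sub_ge0 hX hd yb) //.
- by rewrite -(sdimS hX) ltnS (perv_leq_ge0 hd) // b0.
- move=> Z ZX bZ kZ; apply: (lam_ge_of_sub_ge0 hX hd); rewrite ?insubdK //.
  by rewrite /pdim sdim_insubd // kZ b0.
Qed.

Lemma covers_const_cross x y : pdim d b < 0 <= d k2 -> lcover d a x -> lcover d a y ->
  lam_ge d x b -> lam_ge d y b -> f x = f y.
Proof.
case/andP=> b0 k2_ge0 ax ay xb yb; have k1_ge0 : 0 <= d k1 by rewrite dk12 addr_ge0.
have meet_b z : lcover d a z -> lam_ge d z b -> exists2 p, p \in val z & p \in val b.
  by move=> az zb; apply: (lam_ge_meet hX hd zb); rewrite (pdim_cover az) k1_ge0 ltW.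
have [p px pb] := meet_b x ax xb; have [q qy qb] := meet_b y ay yb.
have exchange r : r \in val b -> forall w w', r \in w -> w \subset val a ->
    r \in w' -> w' \subset val a -> #|w| = k1.+1 -> #|w'| = k1.+1 -> g w = g w'.
  move=> rb w w' rw wa rw' w'a.
  apply: (g_exchange_faces (L := [set r])); rewrite ?sub1set ?cards1 //.
  move=> Z ZX rZ kZ; apply: (lam_ge_of_meet hX hd (p := r)) => //.
    by rewrite /pdim sdim_insubd // kZ /= k2_ge0 ltW.
  by rewrite insubdK // -sub1set.
have k1_gt0 : (0 < k1)%N.
  by apply: (perv_ltn_ge0 hd); rewrite perv0 // lexx dk12 (ltr_wpDl k2_ge0 ltr01).
have [xa ya] := (cover_sub_ge0 k1_ge0 ax, cover_sub_ge0 k1_ge0 ay).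
have [w0 [pqw0 w0a kw0]] : exists w0,
    [/\ [set p; q] \subset w0, w0 \subset val a & #|w0| = k1.+1].
  apply: exists_subset_between.
    by rewrite subUset !sub1set (subsetP xa) ?(subsetP ya).
  by rewrite cards2 ltnS (leq_trans (leq_b1 _) k1_gt0) -(card_cover ax) subset_leq_card.
have [pw0 qw0] : p \in w0 /\ q \in w0 by apply/andP; rewrite -!sub1set -subUset.
rewrite -!g_val; transitivity (g w0).
  by apply: (exchange p); rewrite ?card_cover.
by apply: (exchange q); rewrite ?card_cover.
Qed.

Let cover_sub_le0 x : d k1 <= 0 -> lcover d a x -> lam_ge d x b -> val x \subset val b.
Proof. by move=> k1_le0 ax xb; apply: (lam_ge_sub_le0 hX hd xb); rewrite pdim_cover. Qed.

Let g_exchange_cofaces w w' : d k2 < 0 -> w \subset val b -> w' \subset val b ->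
  (val a \subset w) || (w \subset val a) -> (val a \subset w') || (w' \subset val a) ->
  #|w| = k1.+1 -> #|w'| = k1.+1 -> (#|w :|: w'| <= k2.+1)%N -> g w = g w'.
Proof.
move=> k2_lt0 wb w'b aw aw' kw kw' kww'.
have k2b : (k2 <= sdim b)%N by apply: (perv_leq_le0 hd); rewrite b_below ltW.
have [Z [wwZ Zb kZ]] : exists Z, [/\ w :|: w' \subset Z, Z \subset val b & #|Z| = k2.+1].
  by apply: exists_subset_between; rewrite ?subUset ?wb ?w'b // kww' -(sdimS hX) ltnS.
have [wZ w'Z] : w \subset Z /\ w' \subset Z by apply/andP; rewrite -subUset.
have faceX (A : {set V}) : A \subset Z -> (0 < #|A|)%N -> A \in X.
  by move=> AZ; apply: (face_in_complex hX (subset_trans AZ Zb)).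
have ZX : Z \in X by rewrite faceX ?kZ.
apply: (g_diamond (Z := Z)); rewrite ?faceX ?kw ?kw' ?kZ ?wZ ?w'Z //.
apply: (lam_ge_of_sub_le0 hX hd); last by rewrite insubdK.
by rewrite /pdim sdim_insubd // kZ /= b_below ltW.
Qed.

Lemma covers_const_le0 x y : pdim d a <= 0 -> lcover d a x -> lcover d a y ->
  lam_ge d x b -> lam_ge d y b -> f x = f y.
Proof.
move=> a0 ax ay xb yb.
have k1_lt0 : d k1 < 0 by rewrite -lezD1 -dk1.
have k2_lt0 : d k2 < 0 by rewrite -lezD1 -dk12 ltW.
have k12 : (k1 < k2)%N by apply: (perv_ltn_le0 hd); rewrite dk12 ltrDl ltr01 lezD1.
rewrite -!g_val; apply: (johnson_connected (L := val a) (U := val b));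
  rewrite ?(lcover_sub_le0 hX hd ax a0) ?(lcover_sub_le0 hX hd ay a0) ?cover_sub_le0
    ?(card_cover ax) ?(card_cover ay) ?ltW //.
move=> w w' aw wb aw' w'b kw kw' ww'; apply: g_exchange_cofaces; rewrite ?aw ?aw' //.
by rewrite cardsU kw kw'; lia.
Qed.

Lemma covers_const_vertex x y : d k2 < 0 < pdim d a -> lcover d a x -> lcover d a y ->
  lam_ge d x b -> lam_ge d y b -> f x = f y.
Proof.
case/andP=> k2_lt0 a_gt0 ax ay xb yb.
have k1_0 : d k1 = 0 by apply/eqP; rewrite eq_le -(ltzD1 0) -dk1 a_gt0 dk12 lezD1 k2_lt0.
have k1z : k1 = 0%N by apply: (perv_inj hd); rewrite k1_0 perv0.
have k2_gt0 : (0 < k2)%N.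
  by rewrite -k1z; apply: (perv_ltn_le0 hd); rewrite dk12 ltrDl ltr01 -dk12 k1_0.
rewrite -!g_val; apply: g_exchange_cofaces;
  rewrite ?cover_sub_le0 ?(card_cover ax) ?(card_cover ay) ?k1_0 //.
- by case/andP: ax.
- by case/andP: ay.
- by rewrite (leq_trans (leq_card_setU _ _)) // (card_cover ax) (card_cover ay) k1z.
Qed.

End Diamonds.

Section Confluence.
Variables (V : finType) (X : {set {set V}}) (d : nat -> int).
Hypotheses (hX : simplicial_complex X) (hd : cellular_perversity d).
Local Notation simp := (simplex X).

Lemma covers_const (T : Type) (f : simp -> T) (a b : simp) :
  pdim d b + 2 <= pdim d a ->
  (forall x y z, lcover d a x -> lcover d a y -> lcover d x z -> lcover d y z ->
     lam_ge d z b -> f x = f y) ->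
  forall x y, lcover d a x -> lcover d a y -> lam_ge d x b -> lam_ge d y b -> f x = f y.
Proof.
move=> ba f_diamond x y ax ay xb yb; have dk1 := lcover_pdim ax.
have [|k2 _ dk2] := perv_surj hd (i := sdim b) (j := sdim x) (z := pdim d x - 1).
  by rewrite gerBl ler01 andbT -/(pdim d b); move: ba; rewrite dk1; lia.
have dk12 : d (sdim x) = d k2 + 1 by rewrite dk2 subrK.
have b_below : pdim d b <= d k2 by rewrite dk2; move: ba; rewrite dk1; lia.
have [k2_ge0|k2_lt0] := lerP 0 (d k2).
  have [b0|b_lt0] := lerP 0 (pdim d b).
    exact: (covers_const_ge0 hX hd dk1 dk12 b_below f_diamond).
  by apply: (covers_const_cross hX hd dk1 dk12 f_diamond); rewrite ?b_lt0.
have [a0|a_gt0] := lerP (pdim d a) 0.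
  exact: (covers_const_le0 hX hd dk1 dk12 b_below f_diamond).
by apply: (covers_const_vertex hX hd dk1 dk12 b_below f_diamond); rewrite ?k2_lt0.
Qed.

End Confluence.

Section Chains.
Variables (V : finType) (X : {set {set V}}) (d : nat -> int).
Local Notation simp := (simplex X).
Implicit Types (a b c : simp) (s : seq simp).

Lemma path_pdim a s : path (lcover d) a s -> pdim d a = pdim d (last a s) + (size s)%:Z.
Proof.
elim: s a => [|c s IH] a /=; first by rewrite addr0.
by case/andP=> /lcover_pdim -> /IH ->; rewrite -addrA -addn1 PoszD.
Qed.

Lemma path_nil a s : path (lcover d) a s -> pdim d (last a s) = pdim d a -> s = [::].
Proof.
by move=> /path_pdim -> /eqP; rewrite -subr_eq0 opprD addrA subrr sub0r oppr_eq0; case: s.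
Qed.

Lemma chain_exists a b : exists s, lam_ge d a b ==> path (lcover d) a s && (last a s == b).
Proof.
case: (boolP (lam_ge d a b)) => [/connectP[s ps ->]|_]; last by exists [::].
by exists s; rewrite ps eqxx.
Qed.

Definition chain a b : seq simp := xchoose (chain_exists a b).

Lemma chainP a b : lam_ge d a b -> path (lcover d) a (chain a b) /\ last a (chain a b) = b.
Proof. by move=> ab; have /implyP/(_ ab)/andP[-> /eqP] := xchooseP (chain_exists a b). Qed.

End Chains.

Section PathMaps.
Variables (F : fieldType) (V : finType) (X : {set {set V}}) (d : nat -> int).
Hypotheses (hX : simplicial_complex X) (hd : cellular_perversity d).
Local Notation simp := (simplex X).
Local Notation robj := (robj F X d).
Implicit Types (a b c : simp) (s t : seq simp) (R : robj).

(* The junk value [0] of [cover_hom] and [eq_hom] is never reached along a chain. *)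
Definition cover_hom R a b : 'Hom(r_sp R a, r_sp R b) :=
  if lcover d a b =P true is ReflectT h then r_map R h else 0.

Lemma cover_homE R a b (h : lcover d a b) : cover_hom R a b = r_map R h.
Proof. by rewrite /cover_hom; case: eqP => [h'|//]; rewrite (bool_irrelevance h' h). Qed.

Definition eq_hom (sp : simp -> vectType F) a b : 'Hom(sp a, sp b) :=
  if a =P b is ReflectT e then eq_rect a (fun c => 'Hom(sp a, sp c)) \1%VF b e else 0.

Lemma eq_hom_id sp a : eq_hom sp a a = \1%VF.
Proof. by rewrite /eq_hom; case: eqP => // e; rewrite (eq_irrelevance e erefl). Qed.

Fixpoint path_hom R a b s : 'Hom(r_sp R a, r_sp R b) :=
  if s is c :: s' then (path_hom R c b s' \o cover_hom R a c)%VF else eq_hom (r_sp R) a b.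

Lemma path_hom_cat R a b c s t : last a s = b ->
  (path_hom R b c t \o path_hom R a b s)%VF = path_hom R a c (s ++ t).
Proof.
elim: s a => [|x s IH] a /= e; first by rewrite -e eq_hom_id comp_lfun1r.
by rewrite comp_lfunA IH.
Qed.

Definition lam_hom R a b := path_hom R a b (chain d a b).

Lemma path_hom_lam_level R b n a s : pdim d a = pdim d b + n%:Z ->
  path (lcover d) a s -> last a s = b -> path_hom R a b s = lam_hom R a b.
Proof.
elim: n a s => [|n IH] a s ab ps sb.
  have s0 : s = [::] by apply: (path_nil ps); rewrite sb ab addr0.
  move: sb; rewrite s0 /= => <-; have [pc lc] := chainP (@connect0 _ (lcover d) a).
  by rewrite /lam_hom (path_nil pc) // lc.
have ab_ge : lam_ge d a b by apply/connectP; exists s.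
have lvl z : lcover d a z -> pdim d z = pdim d b + n%:Z.
  by move/lcover_pdim; rewrite ab -addn1 PoszD addrA => /addIr.
have [pc lc] := chainP ab_ge; rewrite /lam_hom.
have a_ne_b : a <> b by move=> eab; move: ab; rewrite eab -{1}(addr0 (pdim d b)) => /addrI.
case: s ps sb => [_ /= /a_ne_b []|x s /= /andP[ax xs] xb].
case: (chain d a b) pc lc => [_ /= /a_ne_b []|y t /= /andP[ay yt] yb].
rewrite (IH x s (lvl x ax) xs xb) (IH y t (lvl y ay) yt yb).
case: n IH lvl ab => [|n] IH lvl ab.
  have below_b z u : lcover d a z -> path (lcover d) z u -> last z u = b -> z = b.
    by move=> az zu zb; rewrite -zb (path_nil zu) // zb (lvl z az) addr0.
  by rewrite (below_b x s) // (below_b y t).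
pose f z := (lam_hom R z b \o cover_hom R a z)%VF.
apply: (covers_const hX hd (a := a) (b := b) (f := f)) => //.
- by rewrite ab lerD2l lez_nat.
- move=> x' y' z ax' ay' x'z y'z zb /=; have [pz lz] := chainP zb.
  have via_z w : lcover d a w -> lcover d w z ->
      lam_hom R w b = (lam_hom R z b \o cover_hom R w z)%VF.
    by move=> aw wz; rewrite -(IH w (z :: chain d z b) (lvl w aw)) //= wz pz.
  rewrite /f (via_z x') // (via_z y') // -!comp_lfunA !cover_homE.
  by rewrite (r_comm R ax' x'z ay' y'z).
- by apply/connectP; exists s.
- by apply/connectP; exists t.
Qed.

Lemma path_hom_lam R a b s : path (lcover d) a s -> last a s = b ->
  path_hom R a b s = lam_hom R a b.
Proof. by move=> ps sb; apply: (@path_hom_lam_level R b (size s)); rewrite // -sb (path_pdim ps). Qed.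

Lemma lam_hom_refl R a : lam_hom R a a = \1%VF.
Proof. by rewrite -(@path_hom_lam R a a [::]) //= eq_hom_id. Qed.

Lemma lam_hom_comp R a b c : lam_ge d a b -> lam_ge d b c ->
  (lam_hom R b c \o lam_hom R a b)%VF = lam_hom R a c.
Proof.
move=> /chainP[pab lab] /chainP[pbc lbc]; rewrite {1 2}/lam_hom path_hom_cat //.
by rewrite path_hom_lam // ?cat_path ?pab ?lab // last_cat lab.
Qed.

End PathMaps.

Section Functors.
Variables (F : fieldType) (V : finType) (X : {set {set V}}) (d : nat -> int).
Hypotheses (hX : simplicial_complex X) (hd : cellular_perversity d).
Local Notation simp := (simplex X).
Local Notation robj := (robj F X d).
Local Notation presheaf := (presheaf F X d).
Implicit Types (a b c : simp) (s : seq simp) (R : robj) (S T : presheaf).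

Definition presheaf_of_robj R : presheaf :=
  @Presheaf F V X d (r_sp R) (fun a b _ => lam_hom R a b) (fun a _ => lam_hom_refl hX hd R a)
    (fun a b c hab hbc _ => lam_hom_comp hX hd R hab hbc).

Lemma presheaf_comm_diamond S a' a1 a2 a'' (h1 : lcover d a' a1) (h1' : lcover d a1 a'')
    (h2 : lcover d a' a2) (h2' : lcover d a2 a'') :
  (ps_map S (connect1 h1') \o ps_map S (connect1 h1))%VF =
  (ps_map S (connect1 h2') \o ps_map S (connect1 h2))%VF.
Proof. by rewrite !(ps_comp S _ _ (connect_trans (connect1 h1) (connect1 h1'))). Qed.

Definition robj_of_presheaf S : robj :=
  @RObj F V X d (ps_sp S) (fun a b h => ps_map S (connect1 h)) (presheaf_comm_diamond S).

Definition robj_hom_of S T (f : presheaf_hom S T) :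
    robj_hom (robj_of_presheaf S) (robj_of_presheaf T) :=
  @RHom F V X d (robj_of_presheaf S) (robj_of_presheaf T) (ph_fun f)
    (fun a b h => ph_nat f (connect1 h)).

Lemma path_hom_of_presheaf S a b s (h : lam_ge d a b) : path (lcover d) a s -> last a s = b ->
  path_hom (robj_of_presheaf S) a b s = ps_map S h.
Proof.
elim: s a h => [|x s IH] a h /=; first by move=> _ ab; subst b; rewrite eq_hom_id (ps_id S).
case/andP=> ax xs xb; have xb_ge : lam_ge d x b by apply/connectP; exists s.
by rewrite (IH x xb_ge) // (cover_homE (robj_of_presheaf S) ax) /= ps_comp.
Qed.

Lemma path_hom_nat R R' (g : robj_hom R R') a b s : path (lcover d) a s -> last a s = b ->
  (rh_fun g b \o path_hom R a b s)%VF = (path_hom R' a b s \o rh_fun g a)%VF.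
Proof.
elim: s a => [|x s IH] a /=.
  by move=> _ ab; subst b; rewrite !eq_hom_id comp_lfun1l comp_lfun1r.
case/andP=> ax xs xb; rewrite comp_lfunA IH // -!comp_lfunA !(cover_homE _ ax).
by rewrite rh_nat.
Qed.

Definition presheaf_hom_of S T (g : robj_hom (robj_of_presheaf S) (robj_of_presheaf T)) :
  presheaf_hom S T.
Proof.
exists (rh_fun g) => a b h; have [ps sb] := chainP h.
rewrite -(path_hom_of_presheaf S h ps sb) -(path_hom_of_presheaf T h ps sb).
exact (path_hom_nat g ps sb).
Defined.

Lemma presheaf_eq (sp : simp -> vectType F)
    (m1 m2 : forall a b, lam_ge d a b -> 'Hom(sp a, sp b)) id1 id2 cp1 cp2 :
  (forall a b h, m1 a b h = m2 a b h) ->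
  @Presheaf F V X d sp m1 id1 cp1 = @Presheaf F V X d sp m2 id2 cp2.
Proof.
move=> e; have em : m1 = m2.
  by do 3!apply: functional_extensionality_dep => ?; apply: e.
by subst m2; rewrite (proof_irrelevance _ id1 id2) (proof_irrelevance _ cp1 cp2).
Qed.

Lemma robj_eq (sp : simp -> vectType F)
    (m1 m2 : forall a b, lcover d a b -> 'Hom(sp a, sp b)) cm1 cm2 :
  (forall a b h, m1 a b h = m2 a b h) -> @RObj F V X d sp m1 cm1 = @RObj F V X d sp m2 cm2.
Proof.
move=> e; have em : m1 = m2.
  by do 3!apply: functional_extensionality_dep => ?; apply: e.
by subst m2; rewrite (proof_irrelevance _ cm1 cm2).
Qed.

Lemma robj_hom_eq R R' (f g : robj_hom R R') : (forall a, rh_fun f a = rh_fun g a) -> f = g.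
Proof.
case: f g => [f f_nat] [g g_nat] /= e.
have efg : f = g by apply: functional_extensionality_dep.
by subst g; rewrite (proof_irrelevance _ f_nat g_nat).
Qed.

Lemma presheaf_hom_eq S T (f g : presheaf_hom S T) :
  (forall a, ph_fun f a = ph_fun g a) -> f = g.
Proof.
case: f g => [f f_nat] [g g_nat] /= e.
have efg : f = g by apply: functional_extensionality_dep.
by subst g; rewrite (proof_irrelevance _ f_nat g_nat).
Qed.

Lemma robj_of_presheafK : cancel robj_of_presheaf presheaf_of_robj.
Proof.
case=> sp m i c; apply: presheaf_eq => a b h; have [ps sb] := chainP h.
exact: path_hom_of_presheaf.
Qed.

Lemma presheaf_of_robjK : cancel presheaf_of_robj robj_of_presheaf.
Proof.
case=> sp m c; apply: robj_eq => a b h /=.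
rewrite -(@path_hom_lam _ _ _ _ hX hd _ a b [:: b]) /= ?h // eq_hom_id comp_lfun1l.
exact: (cover_homE (RObj c) h).
Qed.

End Functors.

Theorem lemma1p2p6 (F : fieldType) (V : finType) (X : {set {set V}})
  (d : nat -> int)
  (hX : simplicial_complex X) (hconn : sc_connected X)
  (hd : cellular_perversity d) :
  Pre_R_isomorphic F X d.
Proof.
exists (@robj_of_presheaf F V X d), (@robj_hom_of F V X d); split.
- by move=> S; apply: robj_hom_eq.
- by move=> S T U f g; apply: robj_hom_eq.
- by exists (presheaf_of_robj hX hd); [exact: robj_of_presheafK | exact: presheaf_of_robjK].
- move=> S T; exists (@presheaf_hom_of F V X d S T) => f.
    exact: presheaf_hom_eq.
  exact: robj_hom_eq.
Qed.
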